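(* Let $D\ge1$, let $Q_D$ be the $D$-dimensional hypercube on $X=\{0,1\}^D$ with adjacency matrix $A$, and let $E_1V$ be the eigenspace of $A$ in $V=\mathbb{R}^X$ for the eigenvalue $D-2$. Every antisymmetric $A$-like matrix $B$ leaves $E_1V$ invariant, and the restriction map $B\mapsto B|_{E_1V}$ is a bijection from the space of antisymmetric $A$-like matrices onto the space of linear maps $T:E_1V\to E_1V$ satisfying $\langle Tu,w\rangle=-\langle u,Tw\rangle$ for all $u,w\in E_1V$.
   Context: $Q_D$ is the graph with vertex set $X=\{0,1\}^D$, two vertices adjacent iff they differ in exactly one coordinate. Matrices are real with rows and columns indexed by $X$ and act on $V=\mathbb{R}^X$, equipped with the standard inner product $\langle u,w\rangle=u^tw$. A matrix $B$ is $A$-like if $BA=AB$ and $B_{xy}=0$ for all $x,y\in X$ that are neither equal nor adjacent; it is antisymmetric if $B^t=-B$. *)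

From mathcomp Require Import all_boot all_order all_algebra.
Set Implicit Arguments. Unset Strict Implicit. Unset Printing Implicit Defensive.
Import Order.TTheory GRing.Theory Num.Theory.
Local Open Scope ring_scope.

Definition cube (D : nat) : finType := D.-tuple bool.

Definition cube_adj (D : nat) (x y : cube D) : bool :=
  #|[set i : 'I_D | tnth x i != tnth y i]| == 1%N.

Definition cmx (R : numDomainType) (D : nat) := cube D -> cube D -> R.
Definition cvec (R : numDomainType) (D : nat) := cube D -> R.

Definition adjA (R : numDomainType) (D : nat) : cmx R D :=
  fun x y => (cube_adj x y)%:R.
Arguments adjA R D : clear implicits.

Definition cmul (R : numDomainType) (D : nat) (B C : cmx R D) : cmx R D :=
  fun x z => \sum_(y : cube D) B x y * C y z.
Definition capply (R : numDomainType) (D : nat) (B : cmx R D) (v : cvec R D)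
  : cvec R D := fun x => \sum_(y : cube D) B x y * v y.

Definition cdot (R : numDomainType) (D : nat) (u w : cvec R D) : R :=
  \sum_(x : cube D) u x * w x.

Definition A_like (R : numDomainType) (D : nat) (B : cmx R D) : Prop :=
  cmul B (adjA R D) = cmul (adjA R D) B /\
  forall x y : cube D, x != y -> ~~ cube_adj x y -> B x y = 0.

Definition antisym (R : numDomainType) (D : nat) (B : cmx R D) : Prop :=
  forall x y : cube D, B y x = - B x y.

Definition inE1 (R : numDomainType) (D : nat) (v : cvec R D) : Prop :=
  capply (adjA R D) v = (fun x => (D%:R - 2) * v x).

(* A linear map T : E_1V -> E_1V, represented by a function on V whose
   values off E_1V are irrelevant. *)
Definition E1_linear_endo (R : numDomainType) (D : nat)
  (T : cvec R D -> cvec R D) : Prop :=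
  (forall v, inE1 v -> inE1 (T v)) /\
  (forall (a : R) (u w : cvec R D), inE1 u -> inE1 w ->
     T (fun x => a * u x + w x) = (fun x => a * T u x + T w x)).

Definition E1_skew (R : numDomainType) (D : nat)
  (T : cvec R D -> cvec R D) : Prop :=
  forall u w : cvec R D, inE1 u -> inE1 w -> cdot (T u) w = - cdot u (T w).

From mathcomp Require Import all_boot all_order all_algebra ring.
From Stdlib Require Import FunctionalExtensionality.
Import Order.TTheory GRing.Theory Num.Theory.
Local Open Scope ring_scope.
Set Implicit Arguments. Unset Strict Implicit.

(* An A-like matrix is supported on the edges of Q_D, so an antisymmetric one
   is an edge weighting [f m x] (its entry at [x, flip x m]) that changes sign
   along each edge; it commutes with A iff all its row sums vanish and a
   cancellation holds around every square [x, flip x m, flip x n].  The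
   characters [chiS S] are eigenvectors of A for D - 2|S| and satisfy Fourier
   inversion, so E_1V is spanned by the [chi i].  Vanishing row sums give
   [B chi_i x = -2 f i x chi_i x], hence B is determined by its restriction.
   Conversely a skew T is realised by [f m x = - chi_m x (T chi_m) x / 2]; the
   square condition for it is exactly the skewness of the matrix of T in the
   basis [chi i]. *)

Section Cube.
Variable D : nat.
Implicit Types (x y : cube D) (k m n : 'I_D).

Definition flip x k : cube D :=
  [tuple if j == k then ~~ tnth x j else tnth x j | j < D].

Lemma tnth_flip x k j : tnth (flip x k) j = if j == k then ~~ tnth x j else tnth x j.
Proof. by rewrite tnth_mktuple. Qed.

Lemma flipK k : involutive (flip^~ k).
Proof. by move=> x; apply: eq_from_tnth => j; rewrite !tnth_flip; case: eqP; rewrite ?negbK. Qed.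

Lemma flipC x m n : flip (flip x m) n = flip (flip x n) m.
Proof. by apply: eq_from_tnth => j; rewrite !tnth_flip; case: (j == n); case: (j == m). Qed.

Lemma flip_inj x : injective (flip x).
Proof.
move=> k l /(congr1 (fun t => tnth t k)); rewrite !tnth_flip eqxx.
by case: eqP => // _; case: (tnth x k).
Qed.

Lemma eq_flip_sym x y m : (x == flip y m) = (y == flip x m).
Proof. by apply/eqP/eqP => ->; rewrite flipK. Qed.

Lemma cube_adjC x y : cube_adj x y = cube_adj y x.
Proof. by rewrite /cube_adj; congr (_ == _); apply: eq_card => i; rewrite !inE eq_sym. Qed.

Lemma cube_adj_flip x k : cube_adj x (flip x k).
Proof.
rewrite /cube_adj (_ : [set i | _] = [set k]) ?cards1 //.
by apply/setP => i; rewrite !inE tnth_flip; case: (i == k); case: (tnth x i).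
Qed.

Lemma cube_adjP x y : cube_adj x y -> exists k, y = flip x k.
Proof.
move=> /cards1P [k Hk]; exists k; apply: eq_from_tnth => j; rewrite tnth_flip.
have := congr1 (fun S : {set 'I_D} => j \in S) Hk; rewrite /= !inE.
by case: (j == k); case: (tnth x j); case: (tnth y j).
Qed.

End Cube.

Section Hypercube.
Variables (R : numFieldType) (D : nat).
Implicit Types (x y z : cube D) (k m n : 'I_D) (S : {set 'I_D}) (u v w : cvec R D).
Local Notation A := (adjA R D).

Lemma opp_fixed_eq0 (a : R) : a = - a -> a = 0.
Proof.
move=> aN; have : 2 * a = 0 by rewrite mulr2n mulrDl mul1r {1}aN addNr.
by move/eqP; rewrite mulf_eq0 pnatr_eq0 => /eqP.
Qed.

Lemma sum_delta (a : cube D) (g : cube D -> R) : \sum_y (y == a)%:R * g y = g a.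
Proof.
rewrite (bigD1 a) //= eqxx mul1r big1 ?addr0 // => y /negbTE ->.
by rewrite mul0r.
Qed.

Lemma capply_cmul (M N : cmx R D) v x : capply (cmul M N) v x = capply M (capply N v) x.
Proof.
rewrite /capply /cmul; under eq_bigr => y _ do rewrite mulr_suml.
rewrite exchange_big /=; apply: eq_bigr => y _.
by rewrite mulr_sumr; apply: eq_bigr => z _; rewrite mulrA.
Qed.

Lemma cdotC u w : cdot u w = cdot w u.
Proof. by apply: eq_bigr => x _; rewrite mulrC. Qed.

Lemma cdot_capplyT (M : cmx R D) u w :
  cdot (capply M u) w = cdot u (capply (fun x y => M y x) w).
Proof.
rewrite /cdot /capply; under eq_bigr => x _ do rewrite mulr_suml.
rewrite exchange_big /=; apply: eq_bigr => y _.
by rewrite mulr_sumr; apply: eq_bigr => x _; ring.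
Qed.

Definition edge_mx (f : 'I_D -> cube D -> R) : cmx R D :=
  fun x y => \sum_m (y == flip x m)%:R * f m x.

Lemma edge_mx_flip f x k : edge_mx f x (flip x k) = f k x.
Proof.
rewrite /edge_mx (bigD1 k) //= eqxx mul1r big1 ?addr0 // => m km.
by rewrite (inj_eq (@flip_inj _ x)) eq_sym (negbTE km) mul0r.
Qed.

Lemma edge_mx_nonadj f x y : ~~ cube_adj x y -> edge_mx f x y = 0.
Proof.
move=> nxy; apply: big1 => m _; case: eqP => [yE|]; last by rewrite mul0r.
by rewrite yE cube_adj_flip in nxy.
Qed.

Lemma edge_mxP (M : cmx R D) : (forall x y, ~~ cube_adj x y -> M x y = 0) ->
  M = edge_mx (fun m x => M x (flip x m)).
Proof.
move=> M0; apply: functional_extensionality => x; apply: functional_extensionality => y.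
have [/cube_adjP [k ->]|nxy] := boolP (cube_adj x y).
  by rewrite edge_mx_flip.
by rewrite edge_mx_nonadj ?M0.
Qed.

Lemma adjA_edge_mx : A = edge_mx (fun _ _ => 1).
Proof.
rewrite {1}(edge_mxP (M := A)) => [|x y /negbTE nxy]; last by rewrite /adjA nxy.
by congr edge_mx; do 2 apply: functional_extensionality => ?; rewrite /adjA cube_adj_flip.
Qed.

Lemma capply_edge_mx f v x : capply (edge_mx f) v x = \sum_m f m x * v (flip x m).
Proof.
rewrite /capply /edge_mx; under eq_bigr => y _ do rewrite mulr_suml.
rewrite exchange_big /=; apply: eq_bigr => m _.
rewrite -(sum_delta (flip x m) (fun y => f m x * v y)).
by apply: eq_bigr => y _; rewrite mulrA.
Qed.

Lemma cmul_edge_mx f (C : cmx R D) x z :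
  cmul (edge_mx f) C x z = \sum_m f m x * C (flip x m) z.
Proof. exact: capply_edge_mx. Qed.

Lemma capply_adjA v x : capply A v x = \sum_m v (flip x m).
Proof. by rewrite adjA_edge_mx capply_edge_mx; apply: eq_bigr => m _; rewrite mul1r. Qed.

Definition sgn (b : bool) : R := if b then -1 else 1.

Definition chiS (S : {set 'I_D}) : cvec R D :=
  fun x => \prod_i (if i \in S then sgn (tnth x i) else 1).

Definition chi i : cvec R D := chiS [set i].

Lemma chiE i x : chi i x = sgn (tnth x i).
Proof.
rewrite /chi /chiS (bigD1 i) //= inE eqxx big1 ?mulr1 // => j ji.
by rewrite inE (negbTE ji).
Qed.

Lemma chi_sqr i x : chi i x * chi i x = 1.
Proof. by rewrite chiE /sgn; case: (tnth x i); rewrite ?mulrNN mulr1. Qed.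

Lemma chi_neq0 i x : chi i x != 0.
Proof. by rewrite chiE /sgn; case: (tnth x i); rewrite ?oppr_eq0 oner_eq0. Qed.

Lemma chiS_flip S x m : chiS S (flip x m) = (if m \in S then -1 else 1) * chiS S x.
Proof.
rewrite /chiS (eq_bigr (fun i => (if (i == m) && (i \in S) then -1 else 1) *
    (if i \in S then sgn (tnth x i) else 1))); last first.
  move=> i _; rewrite tnth_flip; case: (i \in S); rewrite ?andbT ?andbF ?mul1r //.
  by case: (i == m); rewrite ?mul1r //; case: (tnth x i); rewrite /sgn /= ?mulrNN ?mulr1 ?mulN1r.
rewrite big_split /= (bigD1 m) //= eqxx /= big1 ?mulr1 // => i /negbTE ->.
by [].
Qed.

Lemma chi_flip i x m : chi i (flip x m) = (if m == i then -1 else 1) * chi i x.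
Proof. by rewrite /chi chiS_flip inE. Qed.

Lemma sum_flip_sign (a : 'I_D -> R) m :
  \sum_l a l * (if l == m then -1 else 1) = \sum_l a l - 2 * a m.
Proof.
rewrite (bigD1 m) //= [in RHS](bigD1 m) //= eqxx.
rewrite (eq_bigr a) => [|l /negbTE ->]; last by rewrite mulr1.
ring.
Qed.

Lemma sum_sign_set S : \sum_m (if m \in S then -1 else 1 : R) = D%:R - 2 * #|S|%:R.
Proof.
rewrite (eq_bigr (fun m => 1 - 2 * (if m \in S then 1 else 0))) => [|m _]; last first.
  by case: (m \in S); ring.
by rewrite sumrB -mulr_sumr -big_mkcond /= !sumr_const card_ord.
Qed.

Lemma adjA_chiS S : capply A (chiS S) = (fun x => (D%:R - 2 * #|S|%:R) * chiS S x).
Proof.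
apply: functional_extensionality => x; rewrite capply_adjA.
under eq_bigr => m _ do rewrite chiS_flip.
by rewrite -mulr_suml sum_sign_set.
Qed.

Lemma chi_inE1 i : inE1 (chi i).
Proof. by rewrite /inE1 /chi adjA_chiS cards1 mulr1. Qed.

Lemma sum_chiS_mul x y : \sum_S chiS S x * chiS S y = 2 ^+ D * (x == y)%:R.
Proof.
under eq_bigr => S _ do rewrite /chiS -big_split /=.
rewrite (eq_bigr (fun S => \prod_i (if i \in S then sgn (tnth x i) * sgn (tnth y i) else 1)));
  last by move=> S _; apply: eq_bigr => i _; case: (i \in S); rewrite ?mulr1.
rewrite -(@bigA_distr R 0 1 *%R +%R _ (fun i => sgn (tnth x i) * sgn (tnth y i)) (fun=> 1)) /=.
have [->|nxy] := eqVneq x y.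
  rewrite mulr1 (eq_bigr (fun=> 2)) ?prodr_const ?card_ord // => i _.
  by rewrite -chiE chi_sqr.
have [i xyi] : exists i, tnth x i != tnth y i.
  apply/existsP; apply: contraNT nxy => /existsPn xy.
  by apply/eqP/eq_from_tnth => i; apply/eqP/negPn.
rewrite mulr0 (bigD1 i) //= (_ : _ + 1 = 0) ?mul0r //.
by move: xyi; case: (tnth x i); case: (tnth y i); rewrite //= /sgn ?mulr1 ?mulN1r ?mul1r addNr.
Qed.

Lemma cdot_adjA u w : cdot (capply A u) w = cdot u (capply A w).
Proof.
rewrite cdot_capplyT; congr (cdot u (capply _ w)).
by do 2 apply: functional_extensionality => ?; rewrite /adjA cube_adjC.
Qed.

Lemma E1_cdot_chiS v S : inE1 v -> #|S| != 1%N -> cdot v (chiS S) = 0.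
Proof.
move=> Ev S1; set c := cdot v (chiS S).
have := cdot_adjA v (chiS S); rewrite Ev adjA_chiS.
have -> : cdot (fun x => (D%:R - 2) * v x) (chiS S) = (D%:R - 2) * c.
  by rewrite /c /cdot mulr_sumr; apply: eq_bigr => x _; rewrite mulrA.
have -> : cdot v (fun x => (D%:R - 2 * #|S|%:R) * chiS S x) = (D%:R - 2 * #|S|%:R) * c.
  by rewrite /c /cdot mulr_sumr; apply: eq_bigr => x _; ring.
move/eqP; rewrite -subr_eq0 (_ : _ - _ = 2 * (#|S|%:R - 1) * c); last by ring.
by rewrite !mulf_eq0 pnatr_eq0 subr_eq0 pnatr_eq1 (negbTE S1) => /eqP.
Qed.

Definition chi_coord v i : R := cdot v (chi i) / 2 ^+ D.

Definition chi_comb (c : 'I_D -> R) : cvec R D := fun x => \sum_i c i * chi i x.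

Lemma E1_expand v : inE1 v -> v = chi_comb (chi_coord v).
Proof.
move=> Ev; apply: functional_extensionality => x.
have n2 : (2 ^+ D : R) != 0 by rewrite expf_neq0 // pnatr_eq0.
rewrite -(sum_delta x v).
under eq_bigr => y _ do rewrite eq_sym -(mulKf n2 (_%:R)) -sum_chiS_mul -mulrA mulr_suml.
rewrite -mulr_sumr exchange_big /=.
under eq_bigr => S _.
  rewrite (_ : \sum_y _ = chiS S x * cdot v (chiS S)); last first.
    by rewrite /cdot mulr_sumr; apply: eq_bigr => y _; rewrite -mulrA [v y * _]mulrC.
over.
rewrite (bigID (fun S => #|S| == 1%N)) /= [X in _ + X]big1 ?addr0; last first.
  by move=> S S1; rewrite E1_cdot_chiS ?mulr0.
rewrite big_cards1 mulr_sumr; apply: eq_bigr => i _.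
by rewrite /chi_coord /chi; ring.
Qed.

Lemma capply_chi_comb (M : cmx R D) c :
  capply M (chi_comb c) = (fun x => \sum_i c i * capply M (chi i) x).
Proof.
apply: functional_extensionality => x; rewrite /capply /chi_comb.
under eq_bigr => y _ do rewrite mulr_sumr.
rewrite exchange_big /=; apply: eq_bigr => i _.
by rewrite mulr_sumr; apply: eq_bigr => y _; rewrite mulrCA.
Qed.

Lemma A_like_inE1 (B : cmx R D) v : A_like B -> inE1 v -> inE1 (capply B v).
Proof.
move=> [BA _] Ev; apply: functional_extensionality => x.
rewrite -capply_cmul -BA capply_cmul Ev /capply mulr_sumr.
by apply: eq_bigr => y _; rewrite mulrCA.
Qed.

Lemma antisym_skew (B : cmx R D) u w : antisym B ->
  cdot (capply B u) w = - cdot u (capply B w).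
Proof.
move=> BN; rewrite cdot_capplyT /cdot /capply -sumrN; apply: eq_bigr => x _.
rewrite -mulrN -sumrN; congr (_ * _); apply: eq_bigr => y _.
by rewrite BN mulNr.
Qed.

Lemma antisym_A_like_edge_mx (B : cmx R D) : antisym B -> A_like B ->
  B = edge_mx (fun m x => B x (flip x m)).
Proof.
move=> BN [_ B0]; apply: edge_mxP => x y nxy.
have [<-|/B0] := eqVneq x y; last exact.
exact/opp_fixed_eq0/BN.
Qed.

(* Compare the diagonal entries of [B A] and [A B]. *)
Lemma A_like_row_sum0 (B : cmx R D) x : antisym B -> A_like B ->
  \sum_m B x (flip x m) = 0.
Proof.
move=> BN BL; apply: opp_fixed_eq0.
have BAxx : cmul B A x x = \sum_m B x (flip x m).
  rewrite {1}(antisym_A_like_edge_mx BN BL) cmul_edge_mx.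
  by apply: eq_bigr => m _; rewrite /adjA cube_adjC cube_adj_flip mulr1.
have ABxx : cmul A B x x = - \sum_m B x (flip x m).
  rewrite adjA_edge_mx cmul_edge_mx -sumrN.
  by apply: eq_bigr => m _; rewrite mul1r BN.
by rewrite -{1}BAxx -ABxx (proj1 BL).
Qed.

Lemma edge_mx_chi f i x : \sum_m f m x = 0 ->
  capply (edge_mx f) (chi i) x = -2 * f i x * chi i x.
Proof.
move=> f0; rewrite capply_edge_mx.
under eq_bigr => m _ do rewrite chi_flip mulrA.
by rewrite -mulr_suml sum_flip_sign f0; ring.
Qed.

Lemma A_like_restr_inj (B1 B2 : cmx R D) :
  antisym B1 -> A_like B1 -> antisym B2 -> A_like B2 ->
  (forall v, inE1 v -> capply B1 v = capply B2 v) -> B1 = B2.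
Proof.
move=> B1N B1L B2N B2L B12.
rewrite (antisym_A_like_edge_mx B1N B1L) (antisym_A_like_edge_mx B2N B2L).
congr edge_mx; apply: functional_extensionality => i; apply: functional_extensionality => x.
have := congr1 (fun v => v x) (B12 _ (chi_inE1 i)).
rewrite /= {1}(antisym_A_like_edge_mx B1N B1L) {1}(antisym_A_like_edge_mx B2N B2L).
rewrite !edge_mx_chi ?A_like_row_sum0 // => /(mulIf (chi_neq0 i x)).
by move/(mulrI _); apply; rewrite unitfE oppr_eq0 pnatr_eq0.
Qed.

Lemma edge_mx_antisym f : (forall m x, f m (flip x m) = - f m x) -> antisym (edge_mx f).
Proof.
move=> fN x y; rewrite /edge_mx -sumrN; apply: eq_bigr => m _.
by rewrite eq_flip_sym; case: eqP => [->|_]; rewrite ?fN ?mul1r ?mul0r ?oppr0.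
Qed.

(* The entry [(B A - A B) x z] collects, for every 2-step path x -> flip x m -> z,
   the difference of the weights of its two edges.  Pairing the path through
   coordinates (m, n) with the one through (n, m) leaves the square condition
   for m != n, and [4 (z == x) f m x] for m = n, which the row sums kill. *)
Lemma edge_mx_commA f :
  (forall x, \sum_m f m x = 0) ->
  (forall m n x, m != n -> f m x - f n (flip x m) + f n x - f m (flip x n) = 0) ->
  (forall m x, f m (flip x m) = - f m x) ->
  cmul (edge_mx f) A = cmul A (edge_mx f).
Proof.
move=> f0 fsq fN; apply: functional_extensionality => x; apply: functional_extensionality => z.
apply/eqP; rewrite -subr_eq0; apply/eqP.
set h := fun m n => (z == flip (flip x m) n)%:R * (f m x - f n (flip x m)).
have -> : cmul (edge_mx f) A x z - cmul A (edge_mx f) x z = \sum_m \sum_n h m n.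
  rewrite adjA_edge_mx !cmul_edge_mx -sumrB; apply: eq_bigr => m _.
  rewrite /edge_mx mulr_sumr mul1r -sumrB; apply: eq_bigr => n _; rewrite /h; ring.
apply: opp_fixed_eq0; apply/eqP; rewrite -addr_eq0; apply/eqP.
rewrite {2}exchange_big /= -big_split /=.
rewrite (eq_bigr (fun m => 4 * (z == x)%:R * f m x)) => [|m _].
  by rewrite -mulr_sumr f0 mulr0.
rewrite -big_split /= (bigD1 m) //= big1 ?addr0 => [|n nm].
  by rewrite /h flipK fN; ring.
by rewrite /h flipC -mulrDr addrA fsq 1?eq_sym ?mulr0.
Qed.

Lemma inE1_0 : inE1 ((fun=> 0) : cvec R D).
Proof. by apply: functional_extensionality => x; rewrite mulr0 /capply big1 // => y _; rewrite mulr0. Qed.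

Lemma inE1_lin (a : R) u w : inE1 u -> inE1 w -> inE1 (fun x => a * u x + w x).
Proof.
move=> Eu Ew; apply: functional_extensionality => x.
have -> : capply A (fun x => a * u x + w x) x = a * capply A u x + capply A w x.
  by rewrite /capply mulr_sumr -big_split; apply: eq_bigr => y _ /=; ring.
by rewrite Eu Ew; ring.
Qed.

Section SkewEndomorphism.
Variable T : cvec R D -> cvec R D.
Hypotheses (T_endo : E1_linear_endo T) (T_skew : E1_skew T).

Lemma T_zero : T (fun=> 0) = (fun=> 0).
Proof.
have := proj2 T_endo 1 _ _ inE1_0 inE1_0.
rewrite (_ : (fun=> 1 * 0 + 0) = fun=> 0); last first.
  by apply: functional_extensionality => x; rewrite mulr0 addr0.
move=> T00; apply: functional_extensionality => x.
move/(congr1 (fun g => g x)): T00; rewrite /= mul1r => /eqP.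
by rewrite -{1}(addr0 (T _ x)) (inj_eq (addrI _)) eq_sym => /eqP.
Qed.

Lemma T_chi_comb c : T (chi_comb c) = (fun x => \sum_i c i * T (chi i) x).
Proof.
suff /(_ (index_enum 'I_D)) [] : forall s,
    inE1 (fun x => \sum_(i <- s) c i * chi i x) /\
    T (fun x => \sum_(i <- s) c i * chi i x) = (fun x => \sum_(i <- s) c i * T (chi i) x)
  by [].
elim => [|i s [sE1 sT]].
  have nil0 (F : 'I_D -> cube D -> R) : (fun x => \sum_(j <- [::]) F j x) = fun=> 0.
    by apply: functional_extensionality => x; rewrite big_nil.
  by rewrite !nil0 T_zero; split; first exact: inE1_0.
have cons_lin (F : 'I_D -> cube D -> R) :
    (fun x => \sum_(j <- i :: s) c j * F j x) = (fun x => c i * F i x + \sum_(j <- s) c j * F j x).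
  by apply: functional_extensionality => x; rewrite big_cons.
rewrite !cons_lin; split; first exact: inE1_lin (chi_inE1 i) sE1.
by rewrite (proj2 T_endo _ _ _ (chi_inE1 i) sE1) sT.
Qed.

Definition Tcoef i l : R := chi_coord (T (chi i)) l.

Lemma Tcoef_anti i l : Tcoef l i = - Tcoef i l.
Proof. by rewrite /Tcoef /chi_coord (T_skew (chi_inE1 l) (chi_inE1 i)) cdotC mulNr. Qed.

Lemma T_chi i : T (chi i) = chi_comb (Tcoef i).
Proof. exact/E1_expand/(proj1 T_endo)/chi_inE1. Qed.

Lemma T_chi_flip n m x : T (chi n) (flip x m) = T (chi n) x - 2 * Tcoef n m * chi m x.
Proof.
rewrite T_chi /chi_comb.
under eq_bigr => l _ do rewrite chi_flip [m == l]eq_sym mulrCA mulrC.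
by rewrite sum_flip_sign mulrA.
Qed.

(* Chosen so that [edge_mx_chi] turns into [B (chi m) = T (chi m)], as [chi m x ^+ 2 = 1]. *)
Definition Tedge m x : R := - (chi m x * T (chi m) x) / 2.

Lemma Tedge_flip n m x :
  Tedge n (flip x m) = (if m == n then -1 else 1) * (Tedge n x + Tcoef n m * chi n x * chi m x).
Proof.
rewrite /Tedge chi_flip T_chi_flip.
by case: eqP => [->|_]; rewrite ?(opp_fixed_eq0 (Tcoef_anti n n)); field.
Qed.

Lemma Tedge_row_sum0 x : \sum_m Tedge m x = 0.
Proof.
rewrite /Tedge -mulr_suml sumrN.
under eq_bigr => m _ do rewrite T_chi /chi_comb mulr_sumr.
rewrite (_ : \sum_m _ = 0) ?oppr0 ?mul0r //; apply: opp_fixed_eq0.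
rewrite {1}exchange_big -sumrN; apply: eq_bigr => l _; rewrite -sumrN.
by apply: eq_bigr => m _; rewrite Tcoef_anti; ring.
Qed.

Lemma skew_endo_extension : exists B : cmx R D,
  antisym B /\ A_like B /\ forall v, inE1 v -> capply B v = T v.
Proof.
have TedgeN m x : Tedge m (flip x m) = - Tedge m x.
  by rewrite Tedge_flip eqxx (opp_fixed_eq0 (Tcoef_anti m m)) !mul0r addr0 mulN1r.
have Tedge_sq m n x : m != n ->
    Tedge m x - Tedge n (flip x m) + Tedge n x - Tedge m (flip x n) = 0.
  move=> mn; rewrite !Tedge_flip (negbTE mn) eq_sym (negbTE mn) (Tcoef_anti n m); ring.
exists (edge_mx Tedge); split; first exact: edge_mx_antisym.
split; first split.
- exact: edge_mx_commA Tedge_row_sum0 Tedge_sq TedgeN.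
- by move=> x y _; apply: edge_mx_nonadj.
move=> v /E1_expand ->; rewrite capply_chi_comb T_chi_comb.
apply: functional_extensionality => x; apply: eq_bigr => i _.
rewrite edge_mx_chi ?Tedge_row_sum0 // /Tedge.
by rewrite -[T _ x in RHS]mul1r -(chi_sqr i x); field; exact: chi_neq0.
Qed.

End SkewEndomorphism.
End Hypercube.

Theorem proposition9p9 (R : realFieldType) (D : nat) (hD : (1 <= D)%N) :
  (forall B : cmx R D, antisym B -> A_like B ->
     (forall v : cvec R D, inE1 v -> inE1 (capply B v)) /\ E1_skew (capply B)) /\
  (forall B1 B2 : cmx R D, antisym B1 -> A_like B1 -> antisym B2 -> A_like B2 ->
     (forall v : cvec R D, inE1 v -> capply B1 v = capply B2 v) -> B1 = B2) /\
  (forall T : cvec R D -> cvec R D, E1_linear_endo T -> E1_skew T ->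
     exists B : cmx R D, antisym B /\ A_like B /\
       forall v : cvec R D, inE1 v -> capply B v = T v).
Proof.
split.
  move=> B BN BL; split; first by move=> v; apply: A_like_inE1.
  by move=> u w _ _; apply: antisym_skew.
split; first exact: A_like_restr_inj.
by move=> T; apply: skew_endo_extension.
Qed.
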